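(* Let $G$ be a countable abelian group with $\dim_{\mathbb Q}(G\otimes\mathbb Q)<\infty$, and let $H$ be the subgroup of $G$ generated by a maximal independent system of elements of infinite order of $G$ (so $H$ is free abelian of rank $\dim_{\mathbb Q}(G\otimes \mathbb Q)$). Then the exact sequence \[0\to H\overset{i}{\to} G\overset{\pi}{\to} G/H\to 0\] (with $i$ the inclusion and $\pi$ the quotient map) is coarsely split. Hence $G$ is coarsely equivalent to $H\oplus G/H$.
   Context: A proper norm on a group $G$ is a map $\|\cdot\|:G\to\mathbb R_{\ge 0}$ with $\|g\|=0$ iff $g$ is the identity, $\|g\|=\|g^{-1}\|$, $\|gh\|\le\|g\|+\|h\|$, and $\{g:\|g\|\le K\}$ finite for every $K>0$; it induces a proper left invariant metric $d(g,h)=\|g^{-1}h\|$. A map $f:(X,d_X)\to(Y,d_Y)$ is coarse if for every $\delta>0$ there is $\epsilon>0$ with $d_X(x,y)\le\delta\Rightarrow d_Y(f(x),f(y))\le\epsilon$; it is a coarse equivalence if there is a coarse $g:Y\to X$ and constants $K_1,K_2$ with $d_X(g(f(x)),x)\le K_1$, $d_Y(f(g(y)),y)\le K_2$ for all $x,y$. Countable groups are regarded as metric spaces via proper left invariant metrics (any two such metrics on the same countable group are coarsely equivalent via the identity). An exact sequence $1\to K\overset{i}{\to}G\overset{\pi}{\to}Q\to1$ is coarsely split if there are proper left invariant metrics $d_K,d_G,d_Q$ on $K,G,Q$ and a coarse equivalence $f:(G,d_G)\to(K\oplus Q,d_K\oplus d_Q)$ (where $d_K\oplus d_Q$ is the $\ell_1$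 sum metric) such that $f\circ i$ is at bounded distance from the inclusion $k\mapsto(k,1)$ and $\pi'\circ f$ is at bounded distance from $\pi$, where $\pi':K\oplus Q\to Q$ is the projection. A set of nonzero elements $\{x_j\}$ of an abelian group is independent if $\sum n_jx_j=0$ (finite sum, $n_j\in\mathbb Z$) implies $n_jx_j=0$ for all $j$. *)

From HB Require Import structures.
From mathcomp Require Import all_boot all_order all_algebra.
From mathcomp Require Import Rstruct.
Set Implicit Arguments. Unset Strict Implicit. Unset Printing Implicit Defensive.
Import Order.TTheory GRing.Theory Num.Theory.
Local Open Scope ring_scope.

Notation Real := Rdefinitions.R.

Definition proper_norm (K : zmodType) (nrm : K -> Real) : Prop :=
  [/\ forall x, 0 <= nrm x,
      forall x, nrm x = 0 <-> x = 0,
      forall x, nrm (- x) = nrm x,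
      forall x y, nrm (x + y) <= nrm x + nrm y &
      forall k : Real, 0 < k -> exists s : seq K, forall x, nrm x <= k -> x \in s].

Definition norm_dist (K : zmodType) (nrm : K -> Real) : K -> K -> Real :=
  fun g h => nrm (h - g).

Definition sum_dist (X Y : Type) (dX : X -> X -> Real) (dY : Y -> Y -> Real)
  : X * Y -> X * Y -> Real :=
  fun p q => dX p.1 q.1 + dY p.2 q.2.

Definition coarse_map (X Y : Type) (dX : X -> X -> Real) (dY : Y -> Y -> Real)
  (f : X -> Y) : Prop :=
  forall delta : Real, 0 < delta -> exists2 eps : Real, 0 < eps &
    forall x y, dX x y <= delta -> dY (f x) (f y) <= eps.

Definition coarse_equivalence (X Y : Type) (dX : X -> X -> Real)
  (dY : Y -> Y -> Real) (f : X -> Y) : Prop :=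
  coarse_map dX dY f /\
  exists g : Y -> X, [/\ coarse_map dY dX g,
    exists K1 : Real, forall x, dX (g (f x)) x <= K1 &
    exists K2 : Real, forall y, dY (f (g y)) y <= K2].

Definition coarsely_split (K G Q : zmodType) (i : K -> G) (pi : G -> Q) : Prop :=
  exists (nK : K -> Real) (nG : G -> Real) (nQ : Q -> Real),
    [/\ proper_norm nK, proper_norm nG, proper_norm nQ &
    exists f : G -> K * Q,
      [/\ coarse_equivalence (norm_dist nG) (sum_dist (norm_dist nK) (norm_dist nQ)) f,
          exists C : Real, forall k,
            sum_dist (norm_dist nK) (norm_dist nQ) (f (i k)) (k, 0) <= C &
          exists C : Real, forall g, norm_dist nQ (f g).2 (pi g) <= C]].

Definition coarsely_equivalent_groups (X Y : zmodType) : Prop :=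
  exists (nX : X -> Real) (nY : Y -> Real) (f : X -> Y),
    [/\ proper_norm nX, proper_norm nY &
        coarse_equivalence (norm_dist nX) (norm_dist nY) f].

Definition dsum (K Q : zmodType) : zmodType := (K * Q)%type.

Definition infinite_order (G : zmodType) (x : G) : Prop :=
  forall n : int, x *~ n = 0 -> n = 0.

Definition independent (G : zmodType) (S : G -> Prop) : Prop :=
  (forall x, S x -> x != 0) /\
  forall (s : seq G) (c : G -> int), uniq s -> (forall x, x \in s -> S x) ->
    \sum_(x <- s) x *~ c x = 0 -> forall x, x \in s -> x *~ c x = 0.

Definition indep_inf_system (G : zmodType) (S : G -> Prop) : Prop :=
  independent S /\ forall x, S x -> infinite_order x.

Definition maximal_indep_inf_system (G : zmodType) (S : G -> Prop) : Prop :=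
  indep_inf_system S /\
  forall S' : G -> Prop, (forall x, S x -> S' x) -> indep_inf_system S' ->
    forall x, S' x -> S x.

(* Finite torsion-free rank: independent systems of infinite-order elements
   have bounded size (this bound is dim_Q (G ⊗ Q)). *)
Definition finite_rank (G : zmodType) : Prop :=
  exists n : nat, forall s : seq G, uniq s ->
    indep_inf_system (fun x => x \in s) -> (size s <= n)%N.

Definition generated (G : zmodType) (S : G -> Prop) (x : G) : Prop :=
  exists (s : seq G) (c : G -> int), (forall y, y \in s -> S y) /\
    x = \sum_(y <- s) y *~ c y.

(* The maximal independent system is finite (finite rank), and by maximality every
   g in G has a positive multiple in H = <b>.  So g has rational coordinates in the
   basis b of G ⊗ Q; their l1-sum is a seminorm on G and a proper norm on H.  The
   quotient G/H is countable and torsion, so it has the proper norm sending q to the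
   least k such that q lies in the finite subgroup generated by the first k elements
   of an enumeration.  Removing the integer parts of the coordinates of preimages
   gives a section s of pi with coordinates in [0, 1), and g |-> (g - s (pi g), pi g)
   is a bijection G -> H (+) G/H changing distances by at most 2 |b| either way. *)

From HB Require Import structures.
From mathcomp Require Import all_boot all_order all_algebra.
From mathcomp Require Import boolp Rstruct lra.
Set Implicit Arguments. Unset Strict Implicit. Unset Printing Implicit Defensive.
Import Order.TTheory GRing.Theory Num.Theory.
Local Open Scope ring_scope.

Lemma zmod_morphism_of_add (U V : zmodType) (f : U -> V) :
  {morph f : x y / x + y} -> GRing.zmod_morphism f.
Proof. by move=> fD x y; apply/eqP; rewrite eq_sym subr_eq -fD subrK. Qed.

Lemma proper_norm0 (K : zmodType) (nrm : K -> Real) : proper_norm nrm -> nrm 0 = 0.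
Proof. by case=> _ nrm_eq0 _ _ _; apply/nrm_eq0. Qed.

Lemma proper_norm_sum (K Q : zmodType) (nK : K -> Real) (nQ : Q -> Real) :
  proper_norm nK -> proper_norm nQ ->
  proper_norm (fun p : dsum K Q => nK p.1 + nQ p.2).
Proof.
move=> nKp nQp; have nK0 := proper_norm0 nKp; have nQ0 := proper_norm0 nQp.
case: nKp nQp => [k0 k1 k2 k3 k4] [q0 q1 q2 q3 q4]; split.
- by move=> p; rewrite addr_ge0.
- move=> [a c] /=; split; last by case=> -> ->; rewrite nK0 nQ0 addr0.
  move=> ac0; have := k0 a; have := q0 c => c_ge0 a_ge0.
  have a0 : nK a = 0 by lra.
  have c0 : nQ c = 0 by lra.
  by rewrite (iffLR (k1 a) a0) (iffLR (q1 c) c0).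
- by move=> [a c] /=; rewrite k2 q2.
- by move=> [a c] [a' c'] /=; have := k3 a a'; have := q3 c c'; lra.
- move=> r r_gt0; have [sK sKP] := k4 r r_gt0; have [sQ sQP] := q4 r r_gt0.
  exists [seq (a, c) | a <- sK, c <- sQ] => -[a c] /= ac_le.
  by apply: allpairs_f; [apply: sKP | apply: sQP]; have := k0 a; have := q0 c; lra.
Qed.

Lemma coarsely_split_equivalent (K G Q : zmodType) (i : K -> G) (pi : G -> Q) :
  coarsely_split i pi -> coarsely_equivalent_groups G (dsum K Q).
Proof.
move=> [nK [nG [nQ [nKp nGp nQp [f [f_equiv _ _]]]]]].
by exists nG, (fun p : dsum K Q => nK p.1 + nQ p.2), f; split=> //; apply: proper_norm_sum.
Qed.

Lemma coarse_equivalence_of_cancel (X Y : Type) (dX : X -> X -> Real)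
    (dY : Y -> Y -> Real) (f : X -> Y) (g : Y -> X) (C : Real) :
  cancel f g -> cancel g f -> (forall x, dX x x = 0) -> (forall y, dY y y = 0) ->
  (forall x x', dY (f x) (f x') <= dX x x' + C) ->
  (forall y y', dX (g y) (g y') <= dY y y' + C) ->
  coarse_equivalence dX dY f.
Proof.
move=> fK gK dX0 dY0 f_le g_le.
have coarse_le (A B : Type) (dA : A -> A -> Real) (dB : B -> B -> Real) (h : A -> B) :
    (forall a a', dB (h a) (h a') <= dA a a' + C) -> coarse_map dA dB h.
  move=> h_le delta delta_gt0; exists (delta + `|C|) => [|a a' aa'].
    by have := normr_ge0 C; lra.
  by have := h_le a a'; have := ler_norm C; lra.
split; first exact: coarse_le.
exists g; split; first exact: coarse_le.
  by exists 0 => x; rewrite fK dX0.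
by exists 0 => y; rewrite gK dY0.
Qed.

Section MaximalIndependentSystem.
Variables (G : zmodType) (S : G -> Prop).

Lemma generated0 : generated S 0.
Proof. by exists [::], (fun _ => 0); rewrite big_nil. Qed.

Lemma generatedN g : generated S g -> generated S (- g).
Proof.
move=> [s [c [sS ->]]]; exists s, (fun y => - c y); split=> //.
by rewrite -sumrN; apply: eq_bigr => y _; rewrite mulrNz.
Qed.

Lemma indep_inf_system_add g : indep_inf_system S ->
  (forall n : int, generated S (g *~ n) -> n = 0) ->
  indep_inf_system (fun x => S x \/ x = g).
Proof.
move=> [[S_nz S_ind] S_inf] g_free.
have g_inf : infinite_order g.
  by move=> n gn0; apply: g_free; rewrite gn0; apply: generated0.
have g_nz : g != 0.
  apply/eqP => g0; suff : (1 : int) = 0 by [].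
  by apply: g_free; rewrite g0 mul0rz; apply: generated0.
split; last by move=> x [/S_inf|->].
split=> [x [/S_nz|->] //|t c t_uniq tS sum0 x xt].
case: (boolP (g \in t)) => gt; last first.
  apply: (S_ind t c) => // y yt; case: (tS y yt) => // yg.
  by move: gt; rewrite -yg yt.
have remS y : y \in rem g t -> S y.
  rewrite (mem_rem_uniq _ t_uniq) inE => /andP[yg /tS[] // y_eq].
  by move: yg; rewrite y_eq eqxx.
move: sum0; rewrite (big_rem g) //= => /eqP; rewrite addr_eq0 => /eqP cg_sum.
have cg0 : c g = 0.
  by apply: g_free; rewrite cg_sum; apply: generatedN; exists (rem g t), c.
have [->|xg] := eqVneq x g; first by rewrite cg0 mulr0z.
apply: (S_ind (rem g t) c (rem_uniq _ t_uniq) remS).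
  by apply/eqP; rewrite -oppr_eq0 -cg_sum cg0 mulr0z.
by rewrite (mem_rem_uniq _ t_uniq) inE xg.
Qed.

Lemma maximal_indep_multiple_generated g : maximal_indep_inf_system S ->
  exists2 m, (0 < m)%N & generated S (g *+ m).
Proof.
move=> [S_sys S_max]; apply: contrapT => no_multiple.
have g_free (n : int) : generated S (g *~ n) -> n = 0.
  case: n => [[|k]|k] // gen; case: no_multiple.
    by exists k.+1.
  by exists k.+1 => //; rewrite -[g *+ _]opprK; apply: generatedN.
have Sg : S g.
  apply: (S_max _ _ (indep_inf_system_add S_sys g_free)); [by left | by right].
suff : (1 : int) = 0 by [].
apply: g_free; exists [:: g], (fun _ => 1); split; last by rewrite big_seq1.
by move=> y; rewrite mem_seq1 => /eqP ->.
Qed.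

Lemma finite_rank_indep_seq : finite_rank G -> indep_inf_system S ->
  exists2 b : seq G, uniq b & S = (fun x => x \in b).
Proof.
move=> [n rank_n] [[S_nz S_ind] S_inf].
have size_le s : uniq s -> (forall x, x \in s -> S x) -> (size s <= n)%N.
  move=> s_uniq sS; apply: rank_n => //; split; last by move=> x /sS/S_inf.
  by split=> [x /sS/S_nz //|t c t_uniq tS]; apply: S_ind => // x /tS/sS.
pose P k := `[< exists s, [/\ uniq s, forall x, x \in s -> S x & size s = k] >].
have P0 : exists k, P k by exists 0%N; apply/asboolP; exists [::].
have P_le k : P k -> (k <= n)%N by move=> /asboolP[s [s_uniq sS <-]]; apply: size_le.
case: (ex_maxnP P0 P_le) => _ /asboolP[s [s_uniq sS <-]] s_max.
exists s => //; apply/funext => x; apply/propext; split=> [Sx|/sS//].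
apply: contrapT => xs; suff /s_max : P (size s).+1 by rewrite ltnn.
apply/asboolP; exists (x :: s); split=> //=; first by rewrite s_uniq andbT; apply/negP.
by move=> y; rewrite inE => /predU1P[->|/sS].
Qed.

End MaximalIndependentSystem.

Definition int_range (N : nat) : seq int :=
  [seq k%:Z | k <- iota 0 N] ++ [seq - k%:Z | k <- iota 0 N].

Lemma mem_int_range N z : (`|z| < N)%N -> z \in int_range N.
Proof.
rewrite mem_cat; case: z => k /= k_lt; apply/orP; [left|right]; apply/mapP.
  by exists k; rewrite ?mem_iota.
by exists k.+1; rewrite ?mem_iota ?NegzE.
Qed.

Lemma bounded_zcombinations_finite (G : zmodType) (l : seq G) (N : nat) :
  exists B : seq G, forall c : G -> int,
    (forall y, y \in l -> `|c y| < N)%N -> \sum_(y <- l) y *~ c y \in B.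
Proof.
elim: l => [|y l [B lB]]; first by exists [:: 0] => c _; rewrite big_nil mem_seq1.
exists [seq y *~ k + x | k <- int_range N, x <- B] => c c_lt.
rewrite big_cons; apply: allpairs_f.
  by apply: mem_int_range; apply: c_lt; rewrite mem_head.
by apply: lB => z zl; apply: c_lt; rewrite in_cons zl orbT.
Qed.

Lemma mulrn_modn (V : zmodType) (a : V) N j : a *+ N = 0 -> a *+ j = a *+ (j %% N).
Proof. by move=> aN0; rewrite {1}(divn_eq j N) mulrnDr mulnC mulrnA aN0 mul0rn add0r. Qed.

Section EnumeratedTorsionGroup.
Variables (Q : zmodType) (e : nat -> Q).
Hypothesis e_surj : forall q, exists k, e k = q.
Hypothesis Q_torsion : forall q : Q, exists2 N, (0 < N)%N & q *+ N = 0.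

Let torsion_order (q : Q) : nat := s2val (cid2 (Q_torsion q)).
Let torsion_order_gt0 q : (0 < torsion_order q)%N := s2valP (cid2 (Q_torsion q)).
Let mulrn_torsion_order q : q *+ torsion_order q = 0 := s2valP' (cid2 (Q_torsion q)).

Fixpoint subgroup_upto k : seq Q :=
  if k is k'.+1 then
    [seq e k' *+ j + x | j <- iota 0 (torsion_order (e k')), x <- subgroup_upto k']
  else [:: 0].

Lemma mem_subgroup_upto_step k j x :
  x \in subgroup_upto k -> e k *+ j + x \in subgroup_upto k.+1.
Proof.
move=> xk; rewrite (mulrn_modn j (mulrn_torsion_order (e k))).
by apply: allpairs_f => //; rewrite mem_iota add0n ltn_pmod.
Qed.

Lemma mem0_subgroup_upto k : 0 \in subgroup_upto k.
Proof.
elim: k => [|k IH]; first by rewrite mem_seq1.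
by have := mem_subgroup_upto_step 0 IH; rewrite mulr0n addr0.
Qed.

Lemma subgroup_upto_mono k l x : (k <= l)%N ->
  x \in subgroup_upto k -> x \in subgroup_upto l.
Proof.
move=> /subnK <-; elim: (l - k)%N => [//|n IH] /IH xk.
by have := mem_subgroup_upto_step 0 xk; rewrite mulr0n add0r.
Qed.

Lemma subgroup_uptoD k x y : x \in subgroup_upto k -> y \in subgroup_upto k ->
  x + y \in subgroup_upto k.
Proof.
elim: k x y => [|k IH] x y /=; first by rewrite !mem_seq1 => /eqP-> /eqP->; rewrite addr0.
move=> /allpairsP[[j x'] [_ x'k ->]] /allpairsP[[j' y'] [_ y'k ->]] /=.
by rewrite addrACA -mulrnDr; apply/mem_subgroup_upto_step/IH.
Qed.

Lemma subgroup_uptoN k x : x \in subgroup_upto k -> - x \in subgroup_upto k.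
Proof.
elim: k x => [|k IH] x /=; first by rewrite !mem_seq1 => /eqP->; rewrite oppr0.
move=> /allpairsP[[j x'] [_ x'k ->]] /=.
have oppj : - (e k *+ j) = e k *+ (j * (torsion_order (e k)).-1).
  apply/eqP; rewrite eq_sym -addr_eq0 -mulrnDr -{2}[j]muln1 -mulnDr addn1.
  by rewrite prednK // mulnC mulrnA mulrn_torsion_order mul0rn.
by rewrite opprD oppj; apply/mem_subgroup_upto_step/IH.
Qed.

Let subgroup_upto_exhaustive q : exists k, q \in subgroup_upto k.
Proof.
have [k <-] := e_surj q; exists k.+1.
by have := mem_subgroup_upto_step 1 (mem0_subgroup_upto k); rewrite addr0.
Qed.

Definition level q : nat := ex_minn (subgroup_upto_exhaustive q).

Lemma mem_subgroup_level q k : (level q <= k)%N -> q \in subgroup_upto k.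
Proof. by rewrite /level; case: ex_minnP => m qm _ /subgroup_upto_mono; apply. Qed.

Lemma level_min q k : q \in subgroup_upto k -> (level q <= k)%N.
Proof. by rewrite /level; case: ex_minnP => m _; apply. Qed.

Lemma proper_norm_level : proper_norm (fun q => (level q)%:R : Real).
Proof.
split=> [q|q|q|q q'|r r_gt0].
- exact: ler0n.
- split=> [/eqP|->].
    by rewrite pnatr_eq0 -leqn0 => /mem_subgroup_level; rewrite mem_seq1 => /eqP.
  by apply/eqP; rewrite pnatr_eq0 -leqn0 level_min ?mem0_subgroup_upto.
- have level_oppr_le p : (level (- p) <= level p)%N.
    exact/level_min/subgroup_uptoN/mem_subgroup_level/leqnn.
  congr _%:R; apply/eqP.
  by rewrite eqn_leq level_oppr_le /= -{1}[q]opprK level_oppr_le.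
- rewrite -natrD ler_nat (@leq_trans (maxn (level q) (level q'))) //.
    by apply/level_min/subgroup_uptoD; apply: mem_subgroup_level; rewrite ?leq_maxl ?leq_maxr.
  by rewrite geq_max leq_addr leq_addl.
- exists (subgroup_upto (Num.bound r)) => q q_le; apply: mem_subgroup_level.
  by apply: ltnW; rewrite -(ltr_nat Real); apply: le_lt_trans q_le (archi_boundP (ltW r_gt0)).
Qed.

End EnumeratedTorsionGroup.

Lemma torsion_countable_image_proper_norm (T : countType) (Q : zmodType) (f : T -> Q) :
  (forall q, exists t, f t = q) -> (forall q : Q, exists2 N, (0 < N)%N & q *+ N = 0) ->
  exists nQ : Q -> Real, proper_norm nQ.
Proof.
move=> f_surj Q_torsion; pose e k := if unpickle k is Some t then f t else 0.
have e_surj q : exists k, e k = q.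
  by have [t <-] := f_surj q; exists (pickle t); rewrite /e pickleK.
by eexists; apply: (proper_norm_level e_surj Q_torsion).
Qed.

Section RationalCoordinates.
Variables (G : zmodType) (b : seq G).
Hypotheses (b_uniq : uniq b) (b_indep : indep_inf_system (fun x => x \in b)).

Definition in_zspan (g : G) : Prop := exists c : G -> int, g = \sum_(y <- b) y *~ c y.

Lemma in_zspan0 : in_zspan 0.
Proof. by exists (fun _ => 0); rewrite big1 // => y _; rewrite mulr0z. Qed.

Lemma in_zspanD g g' : in_zspan g -> in_zspan g' -> in_zspan (g + g').
Proof.
move=> [c ->] [c' ->]; exists (fun y => c y + c' y).
by rewrite -big_split; apply: eq_bigr => y _; rewrite mulrzDr.
Qed.

Lemma in_zspan_mulz y n : y \in b -> in_zspan (y *~ n).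
Proof.
move=> yb; exists (fun z => if z == y then n else 0).
rewrite (big_rem y) //= eqxx big1_seq ?addr0 // => z /=.
by rewrite (mem_rem_uniq _ b_uniq) inE => /andP[zy _]; rewrite (negbTE zy) mulr0z.
Qed.

Lemma generated_in_zspan g : generated (fun x => x \in b) g <-> in_zspan g.
Proof.
split=> [[s [c [sb ->]]]|[c ->]]; last by exists b, c.
elim: s sb => [|y s IH] sb; first by rewrite big_nil; apply: in_zspan0.
rewrite big_cons; apply: in_zspanD; first by apply/in_zspan_mulz/sb; rewrite mem_head.
by apply: IH => z zs; apply: sb; rewrite in_cons zs orbT.
Qed.

Lemma zspan_coef_unique (c c' : G -> int) :
  \sum_(y <- b) y *~ c y = \sum_(y <- b) y *~ c' y -> {in b, c =1 c'}.
Proof.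
move=> cc' y yb; have [[_ b_ind] b_inf] := b_indep.
have sum0 : \sum_(y <- b) y *~ (c y - c' y) = 0.
  by under eq_bigr do rewrite mulrzBr; rewrite sumrB cc' subrr.
have /b_inf yn0 := b_ind b _ b_uniq (fun _ => id) sum0 y yb.
by apply/eqP; rewrite -subr_eq0; apply/eqP/yn0.
Qed.

Lemma sum_mulz_mulrn (c : G -> int) m :
  (\sum_(y <- b) y *~ c y) *+ m = \sum_(y <- b) y *~ (c y * m%:Z).
Proof. by rewrite -sumrMnl; apply: eq_bigr => y _; rewrite mulrzA -pmulrn. Qed.

Hypothesis b_rational : forall g, exists2 m, (0 < m)%N & in_zspan (g *+ m).

Let denom g : nat := s2val (cid2 (b_rational g)).
Let denom_gt0 g : (0 < denom g)%N := s2valP (cid2 (b_rational g)).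
Let numer g : G -> int := sval (cid (s2valP' (cid2 (b_rational g)))).
Let numerP g : g *+ denom g = \sum_(y <- b) y *~ numer g y :=
  svalP (cid (s2valP' (cid2 (b_rational g)))).

(* [qcoord g] are the coordinates of [g ⊗ 1] in the basis [b ⊗ 1] of [G ⊗ Q]. *)
Definition qcoord (g y : G) : Real := (numer g y)%:~R / (denom g)%:R.

Lemma qcoordE g m (c : G -> int) y : (0 < m)%N ->
  g *+ m = \sum_(y <- b) y *~ c y -> y \in b -> qcoord g y = (c y)%:~R / m%:R.
Proof.
move=> m_gt0 gm yb; apply/eqP; rewrite eqr_div ?pnatr_eq0 -?lt0n //.
have sum_eq : \sum_(z <- b) z *~ (numer g z * m%:Z)
              = \sum_(z <- b) z *~ (c z * (denom g)%:Z).
  by rewrite -!sum_mulz_mulrn -numerP -gm -!mulrnA mulnC.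
have numer_c := zspan_coef_unique sum_eq yb.
by rewrite -[m%:R]/(m%:Z)%:~R -[(denom g)%:R]/(denom g)%:Z%:~R -!intrM numer_c.
Qed.

Lemma qcoord_sum (c : G -> int) y : y \in b ->
  qcoord (\sum_(z <- b) z *~ c z) y = (c y)%:~R.
Proof. by move=> yb; rewrite (@qcoordE _ 1 c) ?mulr1n ?divr1. Qed.

Lemma qcoord0 y : y \in b -> qcoord 0 y = 0.
Proof.
move=> yb; have := qcoord_sum (fun _ => 0) yb.
by rewrite big1 // => z _; rewrite mulr0z.
Qed.

Lemma qcoordD g g' y : y \in b -> qcoord (g + g') y = qcoord g y + qcoord g' y.
Proof.
move=> yb; set m := denom g; set m' := denom g'.
have mm'_gt0 : (0 < m * m')%N by rewrite muln_gt0 !denom_gt0.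
rewrite (@qcoordE _ (m * m') (fun y => numer g y * m'%:Z + numer g' y * m%:Z)) //.
  have m_neq0 : (m%:R : Real) != 0 by rewrite pnatr_eq0 -lt0n denom_gt0.
  have m'_neq0 : (m'%:R : Real) != 0 by rewrite pnatr_eq0 -lt0n denom_gt0.
  by rewrite /qcoord -/m -/m' intrD !intrM natrM -!pmulrn addf_div.
rewrite mulrnDl mulrnA numerP mulnC mulrnA numerP !sum_mulz_mulrn -big_split.
by apply: eq_bigr => z _; rewrite mulrzDr.
Qed.

Lemma qcoordN g y : y \in b -> qcoord (- g) y = - qcoord g y.
Proof. by move=> yb; apply/eqP; rewrite -addr_eq0 -qcoordD // addNr qcoord0. Qed.

Lemma qcoordB g g' y : y \in b -> qcoord (g - g') y = qcoord g y - qcoord g' y.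
Proof. by move=> yb; rewrite qcoordD // qcoordN. Qed.

Definition coord_norm (g : G) : Real := \sum_(y <- b) `|qcoord g y|.

Lemma coord_norm_ge0 g : 0 <= coord_norm g.
Proof. exact: sumr_ge0. Qed.

Lemma coord_norm0 : coord_norm 0 = 0.
Proof. by rewrite /coord_norm big1_seq // => y /= yb; rewrite qcoord0 // normr0. Qed.

Lemma coord_normN g : coord_norm (- g) = coord_norm g.
Proof. by rewrite /coord_norm !big_seq; apply: eq_bigr => y yb; rewrite qcoordN // normrN. Qed.

Lemma coord_normD g g' : coord_norm (g + g') <= coord_norm g + coord_norm g'.
Proof.
rewrite /coord_norm -big_split /= !big_seq; apply: ler_sum => y yb.
by rewrite qcoordD // ler_normD.
Qed.

Lemma qcoord_le_coord_norm g y : y \in b -> `|qcoord g y| <= coord_norm g.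
Proof. by move=> yb; rewrite /coord_norm (big_rem y) //= lerDl sumr_ge0. Qed.

Lemma in_zspan_coord_norm_eq0 h : in_zspan h -> coord_norm h = 0 -> h = 0.
Proof.
move=> [c ->] norm0; rewrite big1_seq // => y /= yb.
have := qcoord_le_coord_norm (\sum_(z <- b) z *~ c z) yb.
rewrite norm0 qcoord_sum // normr_le0 intr_eq0 => /eqP->; exact: mulr0z.
Qed.

Lemma in_zspan_coord_norm_le_finite (T : Real) :
  exists B : seq G, forall h, in_zspan h -> coord_norm h <= T -> h \in B.
Proof.
have [B BP] := bounded_zcombinations_finite b (Num.bound `|T|).
exists B => h [c hc] hT; rewrite hc; apply: BP => y yb.
rewrite -(ltr_nat Real) natr_absz intr_norm -(qcoord_sum c yb) -hc.
apply: le_lt_trans (archi_boundP (normr_ge0 T)).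
exact: le_trans (qcoord_le_coord_norm h yb) (le_trans hT (ler_norm T)).
Qed.

Definition zfloor (g : G) : G := \sum_(y <- b) y *~ Num.floor (qcoord g y).

Lemma in_zspan_zfloor g : in_zspan (zfloor g).
Proof. by exists (fun y => Num.floor (qcoord g y)). Qed.

Lemma coord_norm_sub_zfloor g : coord_norm (g - zfloor g) <= (size b)%:R.
Proof.
rewrite -sum1_size natr_sum /coord_norm !big_seq; apply: ler_sum => y yb.
have /andP[fl_le lt_fl] := floor_itv (qcoord g y).
rewrite qcoordB // qcoord_sum // ger0_norm ?subr_ge0 //.
by move: lt_fl; rewrite intrD; lra.
Qed.

Section Splitting.
Variables (K Q : zmodType) (i : K -> G) (pi : G -> Q).
Hypotheses (iD : {morph i : x y / x + y}) (i_inj : injective i).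
Hypothesis i_image : forall g, in_zspan g <-> exists k, g = i k.
Hypotheses (piD : {morph pi : x y / x + y}) (pi_surj : forall q, exists g, pi g = q).
Hypothesis pi_ker : forall g, pi g = 0 <-> exists k, g = i k.

(* The [raddf] lemmas then apply to [i] and [pi]; a [/=] after rewriting with them
   turns the canonical additive structure back into [i] or [pi]. *)
HB.instance Definition _ := GRing.isZmodMorphism.Build K G i (zmod_morphism_of_add iD).
HB.instance Definition _ := GRing.isZmodMorphism.Build G Q pi (zmod_morphism_of_add piD).

Lemma in_zspan_ker g : in_zspan g <-> pi g = 0.
Proof. by split=> [/i_image/pi_ker|/pi_ker/i_image]. Qed.

Lemma pi_i k : pi (i k) = 0.
Proof. by apply/pi_ker; exists k. Qed.

Lemma quotient_torsion (q : Q) : exists2 m, (0 < m)%N & q *+ m = 0.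
Proof.
have [g <-] := pi_surj q; have [m m_gt0 gm] := b_rational g.
by exists m; rewrite // -(raddfMn pi) /=; apply/in_zspan_ker.
Qed.

Variable nQ : Q -> Real.
Hypothesis nQ_proper : proper_norm nQ.

Definition kcoord (g : G) : K :=
  if pselect (exists k, g = i k) is left gK then sval (cid gK) else 0.

Lemma kcoordK g : in_zspan g -> i (kcoord g) = g.
Proof.
move=> /i_image gK; rewrite /kcoord; case: pselect => // gK'.
by rewrite -(svalP (cid gK')).
Qed.

Lemma kcoord_i k : kcoord (i k) = k.
Proof. by apply: i_inj; rewrite kcoordK //; apply/i_image; exists k. Qed.

Definition pi_preimage (q : Q) : G := sval (cid (pi_surj q)).

Definition sect (q : Q) : G := pi_preimage q - zfloor (pi_preimage q).

Lemma pi_sect q : pi (sect q) = q.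
Proof.
rewrite /sect (raddfB pi) /= (iffLR (in_zspan_ker _) (in_zspan_zfloor _)) subr0.
exact: svalP (cid (pi_surj q)).
Qed.

Lemma coord_norm_sect q : coord_norm (sect q) <= (size b)%:R.
Proof. exact: coord_norm_sub_zfloor. Qed.

Lemma i_kcoord_sub_sect g : i (kcoord (g - sect (pi g))) = g - sect (pi g).
Proof. by apply/kcoordK/in_zspan_ker; rewrite (raddfB pi) /= pi_sect subrr. Qed.

Definition nK (k : K) : Real := coord_norm (i k).
Definition nG (g : G) : Real := coord_norm g + nQ (pi g).

Lemma proper_norm_nK : proper_norm nK.
Proof.
split=> [k|k|k|k k'|r r_gt0].
- exact: coord_norm_ge0.
- split=> [ik0|->]; last by rewrite /nK (raddf0 i) /= coord_norm0.
  apply: i_inj; rewrite (raddf0 i) /=; apply: in_zspan_coord_norm_eq0 ik0.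
  by apply/i_image; exists k.
- by rewrite /nK (raddfN i) /= coord_normN.
- by rewrite /nK iD coord_normD.
- have [B BP] := in_zspan_coord_norm_le_finite r.
  exists (map kcoord B) => k k_le; rewrite -(kcoord_i k); apply/map_f/BP => //.
  by apply/i_image; exists k.
Qed.

Lemma proper_norm_nG : proper_norm nG.
Proof.
have nQ0 := proper_norm0 nQ_proper.
case: nQ_proper => nQ_ge0 nQ_eq0 nQN nQD nQ_fin.
split=> [g|g|g|g g'|r r_gt0].
- by rewrite addr_ge0 ?coord_norm_ge0.
- split=> [nG0|->]; last by rewrite /nG (raddf0 pi) /= coord_norm0 nQ0 addr0.
  have := coord_norm_ge0 g; have := nQ_ge0 (pi g); rewrite /nG in nG0 => ? ?.
  have g0 : coord_norm g = 0 by lra.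
  by apply: in_zspan_coord_norm_eq0 g0; apply/in_zspan_ker/nQ_eq0; lra.
- by rewrite /nG (raddfN pi) /= coord_normN nQN.
- by rewrite /nG piD; have := coord_normD g g'; have := nQD (pi g) (pi g'); lra.
- have [sQ sQP] := nQ_fin r r_gt0.
  have [B BP] := in_zspan_coord_norm_le_finite (r + (size b)%:R).
  exists [seq sect q + h | q <- sQ, h <- B] => g; rewrite /nG => g_le.
  have -> : g = sect (pi g) + (g - sect (pi g)) by rewrite addrC subrK.
  apply: allpairs_f; first by apply: sQP; have := coord_norm_ge0 g; lra.
  apply: BP; first by rewrite -i_kcoord_sub_sect; apply/i_image; eexists.
  apply: le_trans (coord_normD _ _) _; rewrite coord_normN.
  by have := coord_norm_sect (pi g); have := nQ_ge0 (pi g); lra.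
Qed.

Definition split_map (g : G) : K * Q := (kcoord (g - sect (pi g)), pi g).
Definition join_map (p : K * Q) : G := i p.1 + sect p.2.

Lemma split_mapK : cancel split_map join_map.
Proof. by move=> g; rewrite /join_map i_kcoord_sub_sect subrK. Qed.

Lemma pi_join_map p : pi (join_map p) = p.2.
Proof. by rewrite /join_map piD pi_i add0r pi_sect. Qed.

Lemma join_mapK : cancel join_map split_map.
Proof. by move=> [k q]; rewrite /split_map pi_join_map /join_map /= addrK kcoord_i. Qed.

Lemma dist_split_map g g' :
  sum_dist (norm_dist nK) (norm_dist nQ) (split_map g) (split_map g')
    <= norm_dist nG g g' + 2 * (size b)%:R.
Proof.
rewrite /sum_dist /norm_dist /nK /nG /= (raddfB i) /= !i_kcoord_sub_sect (raddfB pi) /=.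
have -> : g' - sect (pi g') - (g - sect (pi g))
    = (g' - g) + (- sect (pi g') + sect (pi g)).
  by rewrite opprB [_ - g]addrC addrACA.
have := coord_normD (g' - g) (- sect (pi g') + sect (pi g)).
have := coord_normD (- sect (pi g')) (sect (pi g)); rewrite coord_normN.
by have := coord_norm_sect (pi g); have := coord_norm_sect (pi g'); lra.
Qed.

Lemma dist_join_map p p' :
  norm_dist nG (join_map p) (join_map p')
    <= sum_dist (norm_dist nK) (norm_dist nQ) p p' + 2 * (size b)%:R.
Proof.
case: p p' => [k q] [k' q'].
rewrite /norm_dist /nG (raddfB pi) /= !pi_join_map /join_map /sum_dist /norm_dist /nK /=.
have -> : i k' + sect q' - (i k + sect q) = i (k' - k) + (sect q' - sect q).
  by rewrite (raddfB i) /= opprD addrACA.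
have := coord_normD (i (k' - k)) (sect q' - sect q).
have := coord_normD (sect q') (- sect q); rewrite coord_normN.
by have := coord_norm_sect q; have := coord_norm_sect q'; lra.
Qed.

Lemma coarsely_split_of_zspan_image : coarsely_split i pi.
Proof.
have nK0 := proper_norm0 proper_norm_nK; have nQ0 := proper_norm0 nQ_proper.
exists nK, nG, nQ; split=> //; [exact: proper_norm_nK | exact: proper_norm_nG |].
exists split_map; split.
- apply: (coarse_equivalence_of_cancel split_mapK join_mapK _ _ dist_split_map dist_join_map).
    by move=> g; rewrite /norm_dist subrr (proper_norm0 proper_norm_nG).
  by move=> p; rewrite /sum_dist /norm_dist !subrr nK0 nQ0 addr0.
- exists (size b)%:R => k; rewrite /sum_dist /norm_dist /nK /= (raddfB i) /=.
  by rewrite i_kcoord_sub_sect subKr pi_i subrr nQ0 addr0 coord_norm_sect.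
- by exists 0 => g; rewrite /norm_dist subrr nQ0.
Qed.

End Splitting.
End RationalCoordinates.

Theorem mainTheorem1 (G : countZmodType) (S : G -> Prop)
  (K Q : zmodType) (i : K -> G) (pi : G -> Q) :
  finite_rank G ->
  maximal_indep_inf_system S ->
  {morph i : x y / x + y} -> injective i ->
  (forall g, generated S g <-> exists k, g = i k) ->
  {morph pi : x y / x + y} -> (forall q, exists g, pi g = q) ->
  (forall g, pi g = 0 <-> exists k, g = i k) ->
  coarsely_split i pi /\ coarsely_equivalent_groups G (dsum K Q).
Proof.
move=> rank_G S_max iD i_inj S_image piD pi_surj pi_ker.
have [b b_uniq S_b] := finite_rank_indep_seq rank_G S_max.1; subst S.
have span_b g := generated_in_zspan b_uniq g.
have b_rational g : exists2 m, (0 < m)%N & in_zspan b (g *+ m).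
  by have [m m_gt0 /span_b] := maximal_indep_multiple_generated g S_max; exists m.
have i_image g : in_zspan b g <-> exists k, g = i k.
  by split=> [/span_b/S_image|/S_image/span_b].
have Q_torsion := quotient_torsion b_rational i_image piD pi_surj pi_ker.
have [nQ nQ_proper] := torsion_countable_image_proper_norm pi_surj Q_torsion.
have i_pi_split : coarsely_split i pi.
  exact: (coarsely_split_of_zspan_image b_uniq S_max.1 b_rational iD i_inj i_image
    piD pi_surj pi_ker nQ_proper).
by split; last apply: coarsely_split_equivalent i_pi_split.
Qed.
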